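(* Let $i,j$ be integers with $0\leq j\leq i$. Then $$\sum_{\lambda\in O(i,j)}(-1)^{ol(\lambda)}\,q^{|\lambda|+ol(\lambda)\,(i-\ell(\lambda)+1)}\,q^{(i-\ell(\lambda))(j-\ell(\lambda))}=1,$$ where $O(i,j)$ is the set of overpartitions defined in the context.
   Context: An overpartition with $k$ nonnegative parts is a sequence $\lambda=(\lambda_1,\dots,\lambda_k)$ of integers with $\lambda_1\geq\cdots\geq\lambda_k\geq 0$ in which the first occurrence (leftmost position) of each value may or may not be marked as ''overlined'' (the value $0$ may also be overlined); thus overlined parts have distinct values. Its size is $|\lambda|=\sum_r\lambda_r$, its length $\ell(\lambda)=k$ counts all parts including zeros, and $ol(\lambda)$ is the number of overlined parts. For $0\leq k\leq j$, $O(i,j,k)$ denotes the set of overpartitions $\lambda$ with exactly $k$ nonnegative parts such that (1) every part is at most $j-1$; and (2) when $k\geq 2$, for each $1\leq s\leq k-1$ and each position $r$ with $\lambda_r=j-s$, at least $k-s$ of the parts $\lambda_{r+1},\dots,\lambda_k$ are overlined. (The paper views each overline of an element of $O(i,j,k)$ as carrying weight $w(\lambda)=i-k+1$; this appears as the factor $i-\ell(\lambda)+1$ in the exponent.) $O(i,0,0)$ consists only of the empty partition, and $O(i,j)=\biguplus_{k=0}^{j}O(i,j,k)$. *)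

From HB Require Import structures.
From mathcomp Require Import all_boot all_order all_algebra.
Set Implicit Arguments. Unset Strict Implicit. Unset Printing Implicit Defensive.
Import Order.TTheory GRing.Theory Num.Theory.

(* An overpartition with k nonnegative parts is encoded as a sequence
   [:: (lambda_1, b_1); ...; (lambda_k, b_k)] of pairs (value, overlined?). *)

Definition op_sorted (s : seq (nat * bool)) : bool :=
  sorted (fun a b : nat => b <= a) (map fst s).

Definition op_first_overlined (s : seq (nat * bool)) : bool :=
  [forall r : 'I_(size s),
     (nth (0, false) s r).2 ==>
     [forall r' : 'I_(size s),
        (r' < r) ==> ((nth (0, false) s r').1 != (nth (0, false) s r).1)]].

Definition is_overpartition (s : seq (nat * bool)) : bool :=
  op_sorted s && op_first_overlined s.

Definition ol (s : seq (nat * bool)) : nat := count snd s.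

Definition op_size (s : seq (nat * bool)) : nat := sumn (map fst s).

(* condition (2) in the definition of O(i,j,k), with k = size s:
   for 1 <= s0 <= k-1 and each position r with lambda_r = j - s0, at least
   k - s0 of the parts after position r are overlined. (Vacuous if k < 2.) *)
Definition op_cond2 (j : nat) (s : seq (nat * bool)) : bool :=
  [forall s0 : 'I_(size s),
     (1 <= s0) ==>
     [forall r : 'I_(size s),
        ((nth (0, false) s r).1 == j - s0) ==>
        (size s - s0 <= count snd (drop r.+1 s))]].

Definition seq_of_tuple (j k : nat) (t : k.-tuple ('I_j * bool)) : seq (nat * bool) :=
  [seq (nat_of_ord p.1, p.2) | p <- t].

(* membership in O(i,j,k) for an overpartition with parts in 'I_j (so every
   part is at most j-1) and exactly k parts.  (The condition does not depend
   on i.) *)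
Definition inO (j k : nat) (t : k.-tuple ('I_j * bool)) : bool :=
  let s := seq_of_tuple t in
  is_overpartition s && op_cond2 j s.

From HB Require Import structures.
From mathcomp Require Import all_boot all_order all_algebra.
From mathcomp Require Import zify ring.
Import GRing.Theory.
Set Implicit Arguments. Unset Strict Implicit.

(* Lowering every part of an overpartition by the number of overlined parts
   after it is a bijection from O(i,j,k) onto the sequences of k weakly
   decreasing parts at most j - k, each freely overlined (the "marked
   partitions in a box").  Under it the weight factors, so O(i,j,k)
   contributes (q^(i-k+1); q)_k [j choose k]_q q^((i-k)(j-k)).  By q-Pascal
   these sums T(i,j) satisfy T(i+1,j+1) = q^(i+1) T(i+1,j) + (1-q^(i+1)) T(i,j),
   and T(i,0) = 1, so T(i,j) = 1 by induction on j. *)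

Definition marked_below j : seq (nat * bool) :=
  [seq (m, b) | m <- iota 0 j, b <- [:: false; true]].

Fixpoint seqs_below (k j : nat) : seq (seq (nat * bool)) :=
  if k is k'.+1 then [seq x :: s | x <- marked_below j, s <- seqs_below k' j]
  else [:: [::]].

Lemma seqs_belowS k j :
  seqs_below k.+1 j = [seq x :: s | x <- marked_below j, s <- seqs_below k j].
Proof. by []. Qed.

Lemma mem_marked_below j x : (x \in marked_below j) = (x.1 < j).
Proof.
case: x => m b; apply/allpairsP/idP => [[[m' b'] [/= + _ [-> _]]]|lt_mj].
  by rewrite mem_iota.
by exists (m, b); split; rewrite ?mem_iota //; case: (b).
Qed.

Lemma mem_seqs_below k j s :
  (s \in seqs_below k j) = (size s == k) && all (fun x => x.1 < j) s.
Proof.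
elim: k s => [|k IH] [|x t] //=.
  by apply/negP => /allpairsP [[? ?] [_ _]].
apply/allpairsP/idP => [[[x' t'] [/= Hx Ht [-> ->]]]|/and3P [Hs Hx Ht]].
  by move: Ht; rewrite IH -mem_marked_below Hx eqSS.
by exists (x, t); split; rewrite ?mem_marked_below ?IH ?Ht // andbT -eqSS.
Qed.

Lemma size_seqs_below k j : size (seqs_below k j) = ((j * 2) ^ k)%N.
Proof. by elim: k => //= k IH; rewrite !size_allpairs IH size_iota expnS. Qed.

Lemma seq_of_tuple_inj j k : injective (@seq_of_tuple j k).
Proof.
move=> t1 t2 /inj_map eq_t; apply: val_inj; apply: eq_t.
by case=> [a b] [c d] [/val_inj -> ->].
Qed.

Lemma perm_seqs_below j k :
  perm_eq [seq seq_of_tuple t | t <- index_enum {: k.-tuple ('I_j * bool)}]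
          (seqs_below k j).
Proof.
set S := map _ _.
have uniqS : uniq S by rewrite map_inj_uniq ?index_enum_uniq //; apply: seq_of_tuple_inj.
have subS : {subset S <= seqs_below k j}.
  move=> s /mapP [t _ ->]; rewrite mem_seqs_below size_map size_tuple eqxx /=.
  by apply/allP => x /mapP [p _ ->] /=.
have sizeS : size (seqs_below k j) <= size S.
  rewrite size_map size_seqs_below -[index_enum _]enumT -cardT.
  by rewrite card_tuple card_prod card_ord card_bool.
apply: (uniq_perm uniqS (leq_size_uniq uniqS subS sizeS)).
exact: (uniq_min_size uniqS subS sizeS).2.
Qed.

Lemma uniq_seqs_below k j : uniq (seqs_below k j).
Proof.
rewrite -(perm_uniq (perm_seqs_below j k)) map_inj_uniq ?index_enum_uniq //.
exact: seq_of_tuple_inj.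
Qed.

Lemma big_tuple_seqs_below (R : nmodType) j k (P : pred (seq (nat * bool)))
    (F : seq (nat * bool) -> R) :
  (\sum_(t : k.-tuple ('I_j * bool) | P (seq_of_tuple t)) F (seq_of_tuple t)
   = \sum_(s <- seqs_below k j | P s) F s)%R.
Proof. by rewrite -(big_map _ P F); apply/perm_big/perm_seqs_below. Qed.

Fixpoint all_with_tail (P : nat * bool -> seq (nat * bool) -> bool) s : bool :=
  if s is x :: t then P x t && all_with_tail P t else true.

Lemma all_with_tailP (P : nat * bool -> seq (nat * bool) -> bool) s :
  reflect (forall r, r < size s -> P (nth (0, false) s r) (drop r.+1 s))
          (all_with_tail P s).
Proof.
elim: s => [|x t IH] /=; first by constructor.
apply: (iffP andP) => [[Px /IH Pt] [|r] lt_r|Ps]; first by rewrite drop0.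
- exact: Pt.
- by split; [rewrite -[t]drop0; exact: Ps 0 _ | apply/IH => r; exact: Ps r.+1].
Qed.

Definition no_overlined_repeat (x : nat * bool) (t : seq (nat * bool)) : bool :=
  all (fun y => y.2 ==> (y.1 != x.1)) t.

Definition part_bound c (x : nat * bool) (t : seq (nat * bool)) : bool :=
  x.1 <= c + ol t.

Definition inO_seq c (s : seq (nat * bool)) : bool :=
  [&& op_sorted s, all_with_tail no_overlined_repeat s
    & all_with_tail (part_bound c) s].

Lemma op_first_overlinedE s :
  op_first_overlined s = all_with_tail no_overlined_repeat s.
Proof.
apply/forallP/all_with_tailP => [H r lt_rs|H r].
  apply/(all_nthP (0, false)) => i; rewrite size_drop nth_drop => lt_i.
  apply/implyP => ol_i; have lt_ri : r.+1 + i < size s by rewrite -ltn_subRL.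
  move/implyP: (H (Ordinal lt_ri)) => /(_ ol_i) /forallP /(_ (Ordinal lt_rs)).
  by rewrite eq_sym /= addSn ltnS leq_addr.
apply/implyP => ol_r; apply/forallP => r'; apply/implyP => lt_r'r.
have lt_i : r - r'.+1 < size (drop r'.+1 s).
  by rewrite size_drop; apply: ltn_sub2r => //; apply: leq_ltn_trans lt_r'r _.
move: (H r' (ltn_ord r')) => /(all_nthP (0, false)) /(_ _ lt_i).
by rewrite nth_drop subnKC // ol_r /= eq_sym.
Qed.

(* With every part below [j], condition (2) at a part of value [j - s0] reads
   [j - s0 <= (j - k) + ol(tail)]; for [s0 >= k] this bound holds anyway. *)
Lemma op_cond2E j s : size s <= j -> all (fun x => x.1 < j) s ->
  op_cond2 j s = all_with_tail (part_bound (j - size s)) s.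
Proof.
move=> le_sj /(all_nthP (0, false)) lt_j; apply/forallP/all_with_tailP.
  move=> H r lt_rs; have := lt_j r lt_rs; rewrite /part_bound.
  case: (leqP (nth (0, false) s r).1 (j - size s)) => [le_c _|lt_c lt_rj].
    exact: leq_trans le_c (leq_addr _ _).
  have lt_s0 : j - (nth (0, false) s r).1 < size s by lia.
  move: (H (Ordinal lt_s0)) => /implyP; rewrite /= subn_gt0 => /(_ lt_rj).
  move=> /forallP /(_ (Ordinal lt_rs)); rewrite /= subKn ?(ltnW lt_rj) // eqxx /ol.
  lia.
move=> H s0; apply/implyP => ge1_s0; apply/forallP => r; apply/implyP => /eqP eq_r.
move: (H r (ltn_ord r)); rewrite /part_bound eq_r /ol.
have := ltn_ord s0; lia.
Qed.

Lemma inO_seqE j k s : k <= j -> s \in seqs_below k j ->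
  is_overpartition s && op_cond2 j s = inO_seq (j - k) s.
Proof.
rewrite mem_seqs_below => le_kj /andP [/eqP size_s lt_j].
by rewrite /is_overpartition op_first_overlinedE op_cond2E ?size_s // -andbA.
Qed.

Definition head_le (x : nat * bool) (t : seq (nat * bool)) : bool :=
  if t is y :: _ then y.1 <= x.1 else true.

Lemma op_sorted_cons x t : op_sorted (x :: t) = head_le x t && op_sorted t.
Proof. by case: t. Qed.

Lemma op_sorted_all x t : op_sorted (x :: t) -> all (fun y => y.1 <= x.1) t.
Proof.
rewrite /op_sorted /= path_sortedE; last first.
  by move=> a b d /= le_ba le_db; apply: leq_trans le_db le_ba.
by rewrite all_map => /andP [].
Qed.

Definition in_box c (u : seq (nat * bool)) : bool :=
  op_sorted u && all (fun x => x.1 <= c) u.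

Lemma inO_seq_cons c x t : inO_seq c (x :: t) =
  [&& head_le x t, no_overlined_repeat x t, part_bound c x t & inO_seq c t].
Proof.
rewrite /inO_seq op_sorted_cons /=.
by case: (head_le x t) (no_overlined_repeat x t) (part_bound c x t)
  => [] [] []; rewrite /= ?andbF.
Qed.

Lemma in_box_cons c x t :
  in_box c (x :: t) = [&& head_le x t, x.1 <= c & in_box c t].
Proof.
rewrite /in_box op_sorted_cons /=.
by case: (head_le x t) (x.1 <= c) => [] []; rewrite ?andbF.
Qed.

Lemma in_box_cons_head c x t : in_box c (x :: t) = (x.1 <= c) && in_box x.1 t.
Proof.
rewrite /in_box op_sorted_cons /=.
case sorted_t: (op_sorted t); last by rewrite !andbF.
case head_x: (head_le x t); last first.
  by case: t head_x {sorted_t} => //= y t head_x; rewrite head_x !andbF.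
have le_x : all (fun y => y.1 <= x.1) t.
  by apply: op_sorted_all; rewrite op_sorted_cons head_x.
case: leqP => //= le_xc; rewrite le_x.
by apply: sub_all le_x => y /= /leq_trans; apply.
Qed.

Lemma ol_cons x t : ol (x :: t) = x.2 + ol t.
Proof. by []. Qed.

Lemma inO_seq_tail c x t : inO_seq c (x :: t) -> inO_seq c t.
Proof. by rewrite inO_seq_cons => /and4P []. Qed.

(* An overlined part differs from the previous one, hence is strictly smaller. *)
Lemma inO_seq_step c x y t : inO_seq c [:: x, y & t] -> y.1 + y.2 <= x.1.
Proof.
rewrite inO_seq_cons => /and4P [/= le_yx /andP [ne_yx _] _ _].
by move: ne_yx; case: y.2 le_yx => //= le_yx /eqP; lia.
Qed.

Lemma ol_le_head c x t : inO_seq c (x :: t) -> ol (x :: t) <= x.1 + x.2.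
Proof.
elim: t x => [|y t IH] x; first by case: x => a []; rewrite /ol /=; lia.
move=> Hxyt; have := IH y (inO_seq_tail Hxyt); have := inO_seq_step Hxyt.
by rewrite !ol_cons; lia.
Qed.

Lemma ol_tail_le_head c x t : inO_seq c (x :: t) -> ol t <= x.1.
Proof.
case: t => [//|y t] Hxyt.
by have := ol_le_head (inO_seq_tail Hxyt); have := inO_seq_step Hxyt; lia.
Qed.

Fixpoint raise (u : seq (nat * bool)) : seq (nat * bool) :=
  if u is x :: u' then (x.1 + ol u', x.2) :: raise u' else [::].

Fixpoint lower (s : seq (nat * bool)) : seq (nat * bool) :=
  if s is x :: t then (x.1 - ol t, x.2) :: lower t else [::].

Lemma ol_raise u : ol (raise u) = ol u.
Proof. by elim: u => // x u IH; rewrite !ol_cons IH. Qed.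

Lemma ol_lower s : ol (lower s) = ol s.
Proof. by elim: s => // x s IH; rewrite !ol_cons IH. Qed.

Lemma size_raise u : size (raise u) = size u.
Proof. by elim: u => //= x u ->. Qed.

Lemma size_lower s : size (lower s) = size s.
Proof. by elim: s => //= x s ->. Qed.

Lemma raiseK : cancel raise lower.
Proof. by elim=> //= [[m b] u IH]; rewrite ol_raise addnK IH. Qed.

Lemma lowerK c s : inO_seq c s -> raise (lower s) = s.
Proof.
elim: s => //= -[m b] t IH Hs.
by rewrite ol_lower subnK ?(ol_tail_le_head Hs) // IH ?(inO_seq_tail Hs).
Qed.

Lemma lower_in_box c s : inO_seq c s -> in_box c (lower s).
Proof.
elim: s => //= x t IH Hs; rewrite in_box_cons IH ?(inO_seq_tail Hs) // andbT.
move: (Hs); rewrite inO_seq_cons => /and4P [_ _ bound_x _].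
apply/andP; split; last by move: bound_x; rewrite /part_bound /=; lia.
case: t {IH bound_x} Hs => [//|y t] Hs /=.
by have := inO_seq_step Hs; lia.
Qed.

Lemma raise_bound m u : all (fun x => x.1 <= m) u -> op_sorted u ->
  all (fun y : nat * bool => y.1 + y.2 <= m + ol u) (raise u).
Proof.
elim: u m => //= x u IH m /andP [le_xm le_um] sorted_xu.
rewrite /ol /= -/(ol u); apply/andP; split; first by lia.
have sorted_u : op_sorted u by move: sorted_xu; rewrite op_sorted_cons => /andP [].
by apply: sub_all (IH _ (op_sorted_all sorted_xu) sorted_u) => y /=; lia.
Qed.

Lemma raise_inO_seq c u : in_box c u -> inO_seq c (raise u).
Proof.
elim: u => //= x u IH; rewrite in_box_cons => /and3P [head_x le_xc box_u].
rewrite inO_seq_cons IH // andbT.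
have sorted_xu : op_sorted (x :: u).
  by rewrite op_sorted_cons head_x; case/andP: box_u.
have := raise_bound (op_sorted_all sorted_xu) (proj1 (andP box_u)).
move=> bound_u; apply/and3P; split.
- by case: u head_x {IH box_u sorted_xu bound_u} => [|y u] //=; lia.
- by apply: sub_all bound_u => y /=; case: y.2 => /=; lia.
- by rewrite /part_bound /= ol_raise; lia.
Qed.

Lemma raise_below c u : all (fun x => x.1 <= c) u ->
  all (fun y => y.1 < c + size u) (raise u).
Proof.
elim: u => //= x u IH /andP [le_xc le_uc]; apply/andP; split.
  by have := count_size snd u; rewrite -/(ol u) /=; lia.
by apply: sub_all (IH le_uc) => y /=; lia.
Qed.

Lemma big_inO_seq_raise (R : nmodType) (F : seq (nat * bool) -> R) k j c :
  c + k <= j ->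
  (\sum_(s <- seqs_below k j | inO_seq c s) F s
   = \sum_(u <- seqs_below k j | in_box c u) F (raise u))%R.
Proof.
move=> le_ckj; rewrite -big_filter -[RHS]big_filter -(big_map raise predT F).
have uniq_below := uniq_seqs_below k j.
apply/perm_big/uniq_perm; rewrite ?filter_uniq ?map_inj_uniq ?filter_uniq //;
  first exact: can_inj raiseK.
move=> s; rewrite mem_filter mem_seqs_below; apply/idP/mapP.
  move=> /and3P [Os /eqP size_s lt_j]; exists (lower s); last by rewrite (lowerK Os).
  rewrite mem_filter mem_seqs_below lower_in_box //= size_lower size_s eqxx /=.
  elim: s {size_s Os} lt_j => //= x t IH /andP [lt_x lt_t]; rewrite IH // andbT.
  lia.
move=> [u]; rewrite mem_filter mem_seqs_below => /and3P [box_u /eqP size_u _] ->.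
rewrite raise_inO_seq //= size_raise size_u eqxx /=.
by apply: sub_all (raise_below (proj2 (andP box_u))) => x /=; rewrite size_u; lia.
Qed.

Local Open Scope ring_scope.

Section QSeries.

Variables (R : comNzRingType) (q : R).

(* The generating function of weakly decreasing sequences of [k] parts at most
   [c], i.e. the Gaussian binomial [k + c choose k]_q. *)
Fixpoint qbinom (k c : nat) : R :=
  if k is k'.+1 then \sum_(m < c.+1) q ^+ m * qbinom k' m else 1.

Definition qpoch (z : R) (k : nat) : R := \prod_(t < k) (1 - z * q ^+ t).

Lemma qbinomS k c : qbinom k.+1 c = \sum_(m < c.+1) q ^+ m * qbinom k m.
Proof. by []. Qed.

Arguments qbinom : simpl never.

Lemma qbinom0n c : qbinom 0 c = 1.
Proof. by []. Qed.

Lemma qbinomn0 k : qbinom k 0 = 1.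
Proof. by elim: k => // k IH; rewrite qbinomS big_ord1 IH expr0 mulr1. Qed.

Lemma qbinom_pascal k c :
  qbinom k.+1 c.+1 = qbinom k c.+1 + q ^+ k.+1 * qbinom k.+1 c.
Proof.
elim: k c => [|k IH] c.
  rewrite qbinomS big_ord_recl expr0 mul1r qbinomS big_distrr; congr (_ + _).
  by apply: eq_bigr => m _ /=; rewrite !mulr1 -exprD.
rewrite [qbinom k.+2 c.+1]qbinomS big_ord_recl /= expr0 mul1r qbinomn0.
under eq_bigr => m _ do rewrite /bump /= add1n IH mulrDr.
rewrite big_split /= addrA; congr (_ + _).
  by rewrite [qbinom k.+1 c.+1]qbinomS [in RHS]big_ord_recl /= expr0 mul1r qbinomn0.
rewrite [qbinom k.+2 c]qbinomS big_distrr; apply: eq_bigr => m _ /=.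
by rewrite !exprS; ring.
Qed.

Lemma qbinomS_sub k j : (k <= j)%N ->
  qbinom k.+1 (j - k) =
  qbinom k (j - k) + (if (k < j)%N then q ^+ k.+1 * qbinom k.+1 (j - k.+1) else 0).
Proof.
rewrite leq_eqVlt => /orP [/eqP <-|lt_kj]; first by rewrite ltnn subnn !qbinomn0 addr0.
by rewrite lt_kj -(subnSK lt_kj) qbinom_pascal.
Qed.

Lemma qpochS z k : qpoch z k.+1 = (1 - z) * qpoch (z * q) k.
Proof.
rewrite /qpoch big_ord_recl expr0 mulr1; congr (_ * _).
by apply: eq_bigr => t _; rewrite (exprS q t) mulrA.
Qed.

Lemma qpochSr z k : qpoch z k.+1 = qpoch z k * (1 - z * q ^+ k).
Proof. by rewrite /qpoch big_ord_recr. Qed.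

Definition qsum_O (i j : nat) : R :=
  \sum_(k < j.+1) qpoch (q ^+ (i - k + 1)) k * qbinom k (j - k) * q ^+ ((i - k) * (j - k)).

Lemma qsum_O_rec i j : (j <= i)%N ->
  qsum_O i.+1 j.+1 = q ^+ i.+1 * qsum_O i.+1 j + (1 - q ^+ i.+1) * qsum_O i j.
Proof.
move=> le_ji; rewrite /qsum_O big_ord_recl [in RHS]big_ord_recl mulrDr -addrA.
congr (_ + _).
  by rewrite /qpoch !big_ord0 !qbinom0n !mul1r -exprD /=; congr (_ ^+ _); lia.
under eq_bigr => k _ do rewrite /= subSS (qbinomS_sub (leq_ord k)) mulrDr mulrDl.
rewrite big_split /= addrC; congr (_ + _).
  rewrite big_ord_recr /= ltnn mulr0 mul0r addr0 big_distrr.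
  apply: eq_bigr => -[k lt_kj] _; rewrite /bump /= add1n lt_kj !subSS.
  set P := qpoch _ _; set B := qbinom _ _.
  transitivity (P * B * q ^+ (k.+1 + (i - k) * (j - k))); first by rewrite exprD; ring.
  have -> : (k.+1 + (i - k) * (j - k) = i.+1 + (i - k) * (j - k.+1))%N by nia.
  by rewrite exprD; ring.
rewrite big_distrr; apply: eq_bigr => -[k lt_kj] _; rewrite /bump /= add1n subSS.
rewrite qpochSr -exprD (_ : (i - k + 1 + k = i.+1)%N); last by lia.
by ring.
Qed.

Lemma qsum_O_eq1 i j : (j <= i)%N -> qsum_O i j = 1.
Proof.
elim: j i => [|j IH] i le_ji.
  by rewrite /qsum_O big_ord1 /qpoch big_ord0 qbinom0n /= !mul1r muln0.
case: i le_ji => [//|i] le_ji.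
by rewrite qsum_O_rec // !IH ?(ltnW le_ji) // !mulr1 addrC subrK.
Qed.

Fixpoint box_weight (z : R) (u : seq (nat * bool)) : R :=
  if u is x :: u' then (if x.2 then - z else 1) * q ^+ x.1 * box_weight (z * q) u'
  else 1.

Lemma box_weight_raise u a :
  (-1) ^+ ol (raise u) * q ^+ (op_size (raise u) + ol (raise u) * a)
  = box_weight (q ^+ a) u.
Proof.
elim: u a => [|[m b] u IH] a /=; first by rewrite mulr1.
rewrite -exprSr -(IH a.+1) !ol_raise /op_size /= -/(op_size (raise u)).
set o := ol u; set S := op_size (raise u).
rewrite (_ : (m + o + S + (b + o) * a = b * a + (m + (S + o * a.+1)))%N); last by nia.
by rewrite !exprD; case: b => /=; rewrite ?expr1 ?expr0 ?mul1n ?muln0; ring.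
Qed.

Lemma sum_box_weight_cons z k j c :
  \sum_(u <- seqs_below k.+1 j | in_box c u) box_weight z u
  = \sum_(x <- marked_below j | (x.1 <= c)%N)
      (if x.2 then - z else 1) * q ^+ x.1
      * \sum_(u <- seqs_below k j | in_box x.1 u) box_weight (z * q) u.
Proof.
rewrite seqs_belowS big_mkcond big_allpairs_dep /= [RHS]big_mkcond.
apply: eq_bigr => x _.
case: leqP => le_xc; last by rewrite big1 // => u _; rewrite in_box_cons_head leqNgt le_xc.
by rewrite big_distrr [RHS]big_mkcond /=; apply: eq_bigr => u _; rewrite in_box_cons_head le_xc.
Qed.

Lemma sum_box_weight z k j c : (c + k <= j)%N ->
  \sum_(u <- seqs_below k j | in_box c u) box_weight z u = qpoch z k * qbinom k c.
Proof.
elim: k c z => [|k IH] c z le_ckj.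
  by rewrite /= big_cons big_nil /in_box /= addr0 /qpoch big_ord0 mul1r.
rewrite sum_box_weight_cons /marked_below big_mkcond big_allpairs /=.
rewrite (eq_bigr (fun m => if (m <= c)%N
  then (1 - z) * qpoch (z * q) k * (q ^+ m * qbinom k m) else 0)); last first.
  move=> m _; rewrite !big_cons big_nil /=.
  by case: leqP => le_mc; rewrite ?IH ?addr0 //; [ring | lia].
rewrite -big_mkcond -big_distrr /= qpochS qbinomS; congr (_ * _).
have -> : iota 0 j = index_iota 0 j by rewrite /index_iota subn0.
rewrite big_mkord.
by rewrite (big_ord_widen j (fun m => q ^+ m * qbinom k m)) //; lia.
Qed.

End QSeries.

Lemma sum_inO_weight (R : comNzRingType) (q : R) a j k : (k <= j)%N ->
  \sum_(t : k.-tuple ('I_j * bool) | inO t)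
     (-1) ^+ ol (seq_of_tuple t)
     * q ^+ (op_size (seq_of_tuple t) + ol (seq_of_tuple t) * a)%N
  = qpoch q (q ^+ a) k * qbinom q k (j - k).
Proof.
move=> le_kj.
rewrite (big_tuple_seqs_below j k (fun s => is_overpartition s && op_cond2 j s)
          (fun s => (-1) ^+ ol s * q ^+ (op_size s + ol s * a)%N)).
rewrite big_seq_cond (eq_bigl (fun s => (s \in seqs_below k j) && inO_seq (j - k) s));
  last by move=> s; case: (boolP (s \in _)) => //= s_below; rewrite (inO_seqE le_kj).
rewrite -big_seq_cond big_inO_seq_raise ?subnK //.
under eq_bigr => u _ do rewrite box_weight_raise.
by rewrite sum_box_weight ?subnK.
Qed.

Unset Implicit Arguments.

Theorem theorem3p1 (R : comNzRingType) (q : R) (i j : nat) (hji : (j <= i)%N) :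
  \sum_(k < j.+1)
    \sum_(t : k.-tuple ('I_j * bool) | inO t)
      (-1) ^+ ol (seq_of_tuple t)
      * q ^+ (op_size (seq_of_tuple t) + ol (seq_of_tuple t) * (i - k + 1))%N
      * q ^+ ((i - k) * (j - k))%N
  = 1.
Proof.
rewrite -[RHS](qsum_O_eq1 q hji) /qsum_O; apply: eq_bigr => -[k lt_kj] _ /=.
by rewrite -big_distrl sum_inO_weight.
Qed.
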